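(* Let $T$ be a left regular near-truss without an absorber. Then $\mathrm{Q}(T)$ is a brace-type near-truss; that is, for all $b\in T$, the retract of $\mathrm{Q}(T)$ at $\frac{b}{b}$, together with the multiplication of fractions $\frac{a}{b}\cdot\frac{a'}{b'}=\frac{\gamma a'}{\gamma' b}$ (where $\gamma,\gamma'\in T$ satisfy $\gamma b'=\gamma' a$), is a skew brace.
   Context: A heap is a set with a ternary operation $[-,-,-]$ satisfying $[a_1,a_2,[a_3,a_4,a_5]]=[[a_1,a_2,a_3],a_4,a_5]$ and $[a,a,b]=b=[b,a,a]$; its retract at $e$ is the group with operation $x+_ey=[x,e,y]$. A pre-truss is a heap with an associative multiplication; a near-truss additionally satisfies $a[b,c,d]=[ab,ac,ad]$. An absorber is $z$ with $tz=z=zt$ for all $t$. $T$ is a domain if for every $a\in T$ that is not an absorber and all $b\neq c$, $ab\neq ac$ and $ba\neq ca$; $T$ is left regular if it is a domain and for all non-absorbers $x,y$ there exist non-absorbers $r,s$ with $rx=sy$. $\mathrm{Q}(T)$ is the set of classes $\frac{a}{b}$ of pairs $(b,a)$, $b$ not an absorber, under $(b,a)\sim(b',a')$ iff $\beta b=\beta'b'$ and $\beta a=\beta'a'$ for some non-absorbers $\beta,\beta'$, with heap operation $\left[\frac{a}{b},\frac{a'}{b'},\frac{a''}{b''}\right]=\frac{[\beta_1a,\beta_2a',\beta_3a'']}{\beta_1b}$ for non-absorbers with $\beta_1b=\beta_2b'=\beta_3b''$, and the multiplication above; this is a well-defined near-truss. A near-truss is brace-type if its multiplication is a group. A skew brace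 is a triple $(B,+,\cdot)$ with $(B,+)$ and $(B,\cdot)$ groups and $a(b+c)=ab-a+ac$. *)

From Stdlib Require Import ClassicalEpsilon.

Set Implicit Arguments.

Section Defs.
Variable T : Type.
Variable hop : T -> T -> T -> T.
Variable mul : T -> T -> T.

Definition is_heap : Prop :=
  (forall a1 a2 a3 a4 a5,
      hop a1 a2 (hop a3 a4 a5) = hop (hop a1 a2 a3) a4 a5) /\
  (forall a b, hop a a b = b /\ hop b a a = b).

Definition is_pre_truss : Prop :=
  is_heap /\ forall a b c, mul a (mul b c) = mul (mul a b) c.

Definition is_near_truss : Prop :=
  is_pre_truss /\
  forall a b c d, mul a (hop b c d) = hop (mul a b) (mul a c) (mul a d).

Definition absorber (z : T) : Prop := forall t, mul t z = z /\ mul z t = z.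

Definition is_domain : Prop :=
  forall a, ~ absorber a -> forall b c, b <> c ->
    mul a b <> mul a c /\ mul b a <> mul c a.

Definition left_regular : Prop :=
  is_domain /\
  forall x y, ~ absorber x -> ~ absorber y ->
    exists r s, ~ absorber r /\ ~ absorber s /\ mul r x = mul s y.

(* A pair (b, a) with b not an absorber stands for the fraction a/b. *)
Definition frac_rel (p q : T * T) : Prop :=
  exists beta beta', ~ absorber beta /\ ~ absorber beta' /\
    mul beta (fst p) = mul beta' (fst q) /\ mul beta (snd p) = mul beta' (snd q).

Definition Q : Type :=
  { S : T * T -> Prop | exists p, ~ absorber (fst p) /\ S = frac_rel p }.

Definition frac (b a : T) : (T * T -> Prop) := frac_rel (b, a).

Definition to_Q (S : T * T -> Prop) (dflt : Q) : Q :=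
  match excluded_middle_informative
          (exists p, ~ absorber (fst p) /\ S = frac_rel p) with
  | left h => exist _ S h
  | right _ => dflt
  end.

(* Heap operation on fractions:
   [a/b, a'/b', a''/b''] = [beta1 a, beta2 a', beta3 a''] / (beta1 b)
   for non-absorbers with beta1 b = beta2 b' = beta3 b''. *)
Definition Q_hop_set (X Y Z : Q) : T * T -> Prop := fun p =>
  exists x y z beta1 beta2 beta3,
    proj1_sig X x /\ proj1_sig Y y /\ proj1_sig Z z /\
    ~ absorber beta1 /\ ~ absorber beta2 /\ ~ absorber beta3 /\
    mul beta1 (fst x) = mul beta2 (fst y) /\
    mul beta2 (fst y) = mul beta3 (fst z) /\
    frac_rel (mul beta1 (fst x),
              hop (mul beta1 (snd x)) (mul beta2 (snd y)) (mul beta3 (snd z))) p.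

Definition Q_hop (X Y Z : Q) : Q := to_Q (Q_hop_set X Y Z) X.

(* Multiplication of fractions:
   (a/b) (a'/b') = (gamma a') / (gamma' b) where gamma b' = gamma' a. *)
Definition Q_mul_set (X Y : Q) : T * T -> Prop := fun p =>
  exists x y gamma gamma',
    proj1_sig X x /\ proj1_sig Y y /\
    mul gamma (fst y) = mul gamma' (snd x) /\
    frac_rel (mul gamma' (fst x), mul gamma (snd y)) p.

Definition Q_mul (X Y : Q) : Q := to_Q (Q_mul_set X Y) X.

Definition Q_of (b a : T) (hb : ~ absorber b) : Q :=
  exist _ (frac_rel (b, a)) (ex_intro _ (b, a) (conj hb eq_refl)).

End Defs.

Definition is_group (G : Type) (op : G -> G -> G) (e : G) (inv : G -> G) : Prop :=
  (forall x y z, op x (op y z) = op (op x y) z) /\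
  (forall x, op e x = x /\ op x e = x) /\
  (forall x, op (inv x) x = e /\ op x (inv x) = e).

Definition is_skew_brace (B : Type) (add mul : B -> B -> B) : Prop :=
  exists (z : B) (neg : B -> B) (one : B) (inv : B -> B),
    is_group add z neg /\ is_group mul one inv /\
    forall a b c, mul a (add b c) = add (add (mul a b) (neg a)) (mul a c).

From Stdlib Require Import List Classical FunctionalExtensionality PropExtensionality ProofIrrelevance ClassicalEpsilon.
Import ListNotations.

(* Without absorbers, left regularity makes the multiplicative semigroup of T
   cancellative and left Ore, so equivalence of fractions behaves as for Ore
   localisations: equivalent fractions brought to a common left multiple of
   their denominators have equal numerators.  Hence any finite family of
   fractions can be written over one denominator D, and on fractions over D the
   heap operation of Q(T) is the heap operation of T on numerators; the heap
   laws and left distributivity thus descend from T.  Fractions form a group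
   under multiplication (identity c/c, inverse of a/b is b/a), so Q(T) is a
   brace-type near-truss, and the retract of a brace-type near-truss at the
   multiplicative identity is a skew brace. *)

Section HeapRetract.
Variables (B : Type) (h : B -> B -> B -> B).
Hypothesis h_heap : is_heap h.

Lemma heap_retract_group (e : B) :
  is_group (fun x y => h x e y) e (fun x => h e x e).
Proof.
  destruct h_heap as [hA hid].
  split; [|split].
  - intros x y z. apply hA.
  - intro x. split; apply hid.
  - intro x. split.
    + rewrite <- hA, (proj1 (hid e x)). apply hid.
    + rewrite hA, (proj2 (hid e x)). apply hid.
Qed.

Lemma skew_brace_of_brace_type (m : B -> B -> B) (one : B) (inv : B -> B) :
  (forall a b c d, m a (h b c d) = h (m a b) (m a c) (m a d)) ->
  is_group m one inv ->
  is_skew_brace (fun x y => h x one y) m.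
Proof.
  intros m_hopr m_group.
  exists one, (fun x => h one x one), one, inv.
  split; [apply heap_retract_group | split; [exact m_group |]].
  destruct h_heap as [hA hid].
  intros a b c.
  rewrite m_hopr, (proj2 (proj1 (proj2 m_group) a)).
  rewrite <- (hA (m a b) one (h one a one) one (m a c)).
  rewrite <- (hA one a one one (m a c)), (proj1 (hid one (m a c))).
  now rewrite (hA (m a b) one one), (proj2 (hid one (m a b))).
Qed.

End HeapRetract.

Section OreFractions.
Variables (T : Type) (mul : T -> T -> T).
Hypothesis mulA : forall a b c, mul a (mul b c) = mul (mul a b) c.
Hypothesis mul_regular : left_regular mul.
Hypothesis no_absorber : forall z, ~ absorber mul z.

Lemma mul_cancel_l a b c : mul a b = mul a c -> b = c.
Proof.
  intro E. apply NNPP. intro Hbc.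
  exact (proj1 (proj1 mul_regular a (no_absorber a) b c Hbc) E).
Qed.

Lemma mul_cancel_r a b c : mul b a = mul c a -> b = c.
Proof.
  intro E. apply NNPP. intro Hbc.
  exact (proj2 (proj1 mul_regular a (no_absorber a) b c Hbc) E).
Qed.

Lemma mul_ore x y : exists r s, mul r x = mul s y.
Proof.
  destruct (proj2 mul_regular x y (no_absorber x) (no_absorber y))
    as [r [s [_ [_ E]]]].
  eauto.
Qed.

Lemma frac_rel_intro b a b' a' c c' :
  mul c b = mul c' b' -> mul c a = mul c' a' -> frac_rel mul (b, a) (b', a').
Proof. intros. exists c, c'. auto. Qed.

Lemma frac_rel_num_eq {b a b' a' c c'} :
  frac_rel mul (b, a) (b', a') -> mul c b = mul c' b' -> mul c a = mul c' a'.
Proof.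
  intros [m [m' [_ [_ [Eb Ea]]]]] E; simpl in *.
  destruct (mul_ore c m) as [u [v Euv]].
  assert (Ec' : mul u c' = mul v m').
  { apply (mul_cancel_r b').
    now rewrite <- !mulA, <- Eb, <- E, !mulA, Euv. }
  apply (mul_cancel_l u).
  now rewrite !mulA, Euv, Ec', <- !mulA, Ea.
Qed.

Lemma frac_rel_refl p : frac_rel mul p p.
Proof. destruct p as [b a]. now apply frac_rel_intro with b b. Qed.

Lemma frac_rel_sym {p q} : frac_rel mul p q -> frac_rel mul q p.
Proof. intros [c [c' [? [? [? ?]]]]]. exists c', c. auto. Qed.

Lemma frac_rel_trans {p q r} :
  frac_rel mul p q -> frac_rel mul q r -> frac_rel mul p r.
Proof.
  destruct p as [b a], q as [b' a'], r as [b'' a''].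
  intros [c [c' [_ [_ [F1 F2]]]]] [m [m' [_ [_ [E1 E2]]]]]; simpl in *.
  destruct (mul_ore c' m) as [u [v Huv]].
  apply frac_rel_intro with (mul u c) (mul v m').
  - now rewrite <- !mulA, F1, <- E1, !mulA, Huv.
  - now rewrite <- !mulA, F2, <- E2, !mulA, Huv.
Qed.

Lemma frac_rel_scale b a t : frac_rel mul (mul t b, mul t a) (b, a).
Proof. apply frac_rel_intro with b (mul b t); apply mulA. Qed.

Definition Qfrac (b a : T) : Q mul := Q_of a (no_absorber b).

Lemma Q_eq (X Y : Q mul) : proj1_sig X = proj1_sig Y -> X = Y.
Proof. apply eq_sig_hprop. intros. apply proof_irrelevance. Qed.

Lemma Qfrac_eq b a b' a' :
  frac_rel mul (b, a) (b', a') -> Qfrac b a = Qfrac b' a'.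
Proof.
  intro H. apply Q_eq. simpl.
  apply functional_extensionality. intro p.
  apply propositional_extensionality. split; intro K.
  - exact (frac_rel_trans (frac_rel_sym H) K).
  - exact (frac_rel_trans H K).
Qed.

Lemma Qfrac_scale b a t : Qfrac (mul t b) (mul t a) = Qfrac b a.
Proof. apply Qfrac_eq, frac_rel_scale. Qed.

Lemma Qfrac_diag a c : Qfrac a a = Qfrac c c.
Proof.
  destruct (mul_ore a c) as [r [s E]].
  apply Qfrac_eq. now apply frac_rel_intro with r s.
Qed.

Lemma Q_frac_rep (X : Q mul) : exists b a, X = Qfrac b a.
Proof.
  destruct X as [S [[b a] [Hb HS]]]. exists b, a. now apply Q_eq.
Qed.

Lemma to_Q_frac S (dflt : Q mul) b a :
  S = frac_rel mul (b, a) -> to_Q S dflt = Qfrac b a.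
Proof.
  intro HS. unfold to_Q. destruct excluded_middle_informative as [Hclass | Hnot].
  - now apply Q_eq.
  - exfalso. apply Hnot. exists (b, a). split; [apply no_absorber | exact HS].
Qed.

Lemma frac_rel_Q_mul {b a b' a' x y g g' d d'} :
  frac_rel mul (b, a) x -> frac_rel mul (b', a') y ->
  mul g b' = mul g' a -> mul d (fst y) = mul d' (snd x) ->
  frac_rel mul (mul g' b, mul g a') (mul d' (fst x), mul d (snd y)).
Proof.
  destruct x as [x1 x2], y as [y1 y2]; simpl.
  intros Hx Hy E F.
  destruct (mul_ore (mul g' b) (mul d' x1)) as [e [e' He]].
  assert (Ka : mul (mul e g') a = mul (mul e' d') x2).
  { apply (frac_rel_num_eq Hx). now rewrite <- !mulA. }
  assert (Ka' : mul (mul e g) a' = mul (mul e' d) y2).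
  { apply (frac_rel_num_eq Hy). now rewrite <- !mulA, E, F, !mulA. }
  apply frac_rel_intro with e e'; [exact He | now rewrite !mulA].
Qed.

Lemma Q_mul_frac {b a b' a' g g'} :
  mul g b' = mul g' a ->
  Q_mul (Qfrac b a) (Qfrac b' a') = Qfrac (mul g' b) (mul g a').
Proof.
  intro E. apply to_Q_frac.
  apply functional_extensionality. intro p.
  apply propositional_extensionality. split.
  - intros [x [y [d [d' [Hx [Hy [F R]]]]]]].
    exact (frac_rel_trans (frac_rel_Q_mul Hx Hy E F) R).
  - intro R. exists (b, a), (b', a'), g, g'.
    repeat split; try apply frac_rel_refl; assumption.
Qed.

Lemma Q_mulA (X Y Z : Q mul) : Q_mul X (Q_mul Y Z) = Q_mul (Q_mul X Y) Z.
Proof.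
  destruct (Q_frac_rep X) as [b [a ->]].
  destruct (Q_frac_rep Y) as [b' [a' ->]].
  destruct (Q_frac_rep Z) as [b'' [a'' ->]].
  destruct (mul_ore b'' a') as [r [r' Er]].
  destruct (mul_ore (mul r' b') a) as [s [s' Es]].
  rewrite (Q_mul_frac Er), (Q_mul_frac Es).
  rewrite (Q_mul_frac (g := mul s r') (g' := s')); [| now rewrite <- mulA].
  rewrite (Q_mul_frac (g := mul b (mul s r)) (g' := b));
    [| now rewrite <- !mulA, Er].
  now rewrite <- !mulA, Qfrac_scale.
Qed.

Lemma Q_mul1l c (X : Q mul) : Q_mul (Qfrac c c) X = X.
Proof.
  destruct (Q_frac_rep X) as [b [a ->]].
  destruct (mul_ore b c) as [g [g' E]].
  now rewrite (Q_mul_frac E), <- E, Qfrac_scale.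
Qed.

Lemma Q_mul1r c (X : Q mul) : Q_mul X (Qfrac c c) = X.
Proof.
  destruct (Q_frac_rep X) as [b [a ->]].
  destruct (mul_ore c a) as [g [g' E]].
  now rewrite (Q_mul_frac E), E, Qfrac_scale.
Qed.

Definition Q_inv (X : Q mul) : Q mul :=
  to_Q (fun p => proj1_sig X (snd p, fst p)) X.

Lemma Q_inv_frac b a : Q_inv (Qfrac b a) = Qfrac a b.
Proof.
  apply to_Q_frac. apply functional_extensionality. intros [q1 q2].
  apply propositional_extensionality. unfold frac_rel; simpl.
  split; intros [c [c' [? [? [? ?]]]]]; exists c, c'; auto.
Qed.

Lemma Q_mul_group (c : T) : is_group (@Q_mul T mul) (Qfrac c c) Q_inv.
Proof.
  split; [exact Q_mulA | split; [split; [apply Q_mul1l | apply Q_mul1r] |]].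
  intro X. destruct (Q_frac_rep X) as [b [a ->]].
  rewrite Q_inv_frac, !(Q_mul_frac (eq_refl (mul c _))).
  split; apply Qfrac_diag.
Qed.

Definition has_denom (D : T) (X : Q mul) : Prop := exists a, X = Qfrac D a.

Lemma has_denom_scale t D X : has_denom D X -> has_denom (mul t D) X.
Proof.
  intros [a ->]. exists (mul t a). now rewrite Qfrac_scale.
Qed.

Lemma Q_extend_denom D X : exists t, has_denom (mul t D) X.
Proof.
  destruct (Q_frac_rep X) as [b [a ->]].
  destruct (mul_ore b D) as [r [s E]].
  exists s, (mul r a). now rewrite <- E, Qfrac_scale.
Qed.

Lemma Q_common_denom X Xs : exists D, Forall (has_denom D) (X :: Xs).
Proof.
  destruct (Q_frac_rep X) as [d _].
  enough (H : forall Ys, exists D, Forall (has_denom D) Ys) by apply H.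
  induction Ys as [| Y Ys [D HD]].
  - now exists d.
  - destruct (Q_extend_denom D Y) as [t Ht].
    exists (mul t D). constructor; [exact Ht |].
    exact (Forall_impl _ (has_denom_scale t D) HD).
Qed.

Section FractionHeap.
Variable hop : T -> T -> T -> T.
Hypothesis hop_heap : is_heap hop.
Hypothesis mul_hopr :
  forall a b c d, mul a (hop b c d) = hop (mul a b) (mul a c) (mul a d).

Lemma frac_rel_Q_hop_same_denom {D a a' a'' x y z g1 g2 g3} :
  frac_rel mul (D, a) x -> frac_rel mul (D, a') y -> frac_rel mul (D, a'') z ->
  mul g1 (fst x) = mul g2 (fst y) -> mul g2 (fst y) = mul g3 (fst z) ->
  frac_rel mul (D, hop a a' a'')
    (mul g1 (fst x), hop (mul g1 (snd x)) (mul g2 (snd y)) (mul g3 (snd z))).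
Proof.
  destruct x as [x1 x2], y as [y1 y2], z as [z1 z2]; simpl.
  intros Hx Hy Hz E1 E2.
  destruct (mul_ore D (mul g1 x1)) as [e [e' He]].
  assert (K1 : mul e a = mul (mul e' g1) x2).
  { apply (frac_rel_num_eq Hx). now rewrite <- mulA. }
  assert (K2 : mul e a' = mul (mul e' g2) y2).
  { apply (frac_rel_num_eq Hy). now rewrite <- mulA, <- E1. }
  assert (K3 : mul e a'' = mul (mul e' g3) z2).
  { apply (frac_rel_num_eq Hz). now rewrite <- mulA, <- E2, <- E1. }
  apply frac_rel_intro with e e'; [exact He |].
  now rewrite !mul_hopr, K1, K2, K3, !mulA.
Qed.

Lemma Q_hop_same_denom D a a' a'' :
  Q_hop hop (Qfrac D a) (Qfrac D a') (Qfrac D a'') = Qfrac D (hop a a' a'').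
Proof.
  apply to_Q_frac.
  apply functional_extensionality. intro p.
  apply propositional_extensionality. split.
  - intros [x [y [z [g1 [g2 [g3 [Hx [Hy [Hz [_ [_ [_ [E1 [E2 R]]]]]]]]]]]]]].
    exact (frac_rel_trans (frac_rel_Q_hop_same_denom Hx Hy Hz E1 E2) R).
  - intro R. exists (D, a), (D, a'), (D, a''), D, D, D.
    repeat split; try apply frac_rel_refl; try apply no_absorber; simpl.
    rewrite <- mul_hopr.
    exact (frac_rel_trans (frac_rel_scale _ _ D) R).
Qed.

Lemma Q_is_heap : is_heap (@Q_hop T hop mul).
Proof.
  destruct hop_heap as [hopA hop_id]. split.
  - intros X1 X2 X3 X4 X5.
    destruct (Q_common_denom X1 [X2; X3; X4; X5]) as [D Hall].
    repeat rewrite Forall_cons_iff in Hall.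
    destruct Hall as ([a1 ->] & [a2 ->] & [a3 ->] & [a4 ->] & [a5 ->] & _).
    now rewrite !Q_hop_same_denom, hopA.
  - intros X Y.
    destruct (Q_common_denom X [Y]) as [D Hall].
    repeat rewrite Forall_cons_iff in Hall.
    destruct Hall as ([a ->] & [b ->] & _).
    rewrite !Q_hop_same_denom.
    split; f_equal; apply hop_id.
Qed.

Lemma Q_mul_hopr (X Y Z W : Q mul) :
  Q_mul X (Q_hop hop Y Z W) = Q_hop hop (Q_mul X Y) (Q_mul X Z) (Q_mul X W).
Proof.
  destruct (Q_common_denom Y [Z; W]) as [D Hall].
  repeat rewrite Forall_cons_iff in Hall.
  destruct Hall as ([a1 ->] & [a2 ->] & [a3 ->] & _).
  destruct (Q_frac_rep X) as [b [a ->]].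
  destruct (mul_ore D a) as [g [g' E]].
  now rewrite Q_hop_same_denom, !(Q_mul_frac E), Q_hop_same_denom, mul_hopr.
Qed.

End FractionHeap.
End OreFractions.

Theorem corollary5p5 (T : Type) (hop : T -> T -> T -> T) (mul : T -> T -> T)
  (HT : is_near_truss hop mul) (Hreg : left_regular mul)
  (Hnoabs : forall z : T, ~ absorber mul z) :
  forall b : T,
    is_skew_brace
      (fun X Y : Q mul => @Q_hop T hop mul X (@Q_of T mul b b (Hnoabs b)) Y)
      (@Q_mul T mul).
Proof.
  intro b.
  destruct HT as [[hop_heap mulA] mul_hopr].
  eapply (skew_brace_of_brace_type _ _
            (Q_is_heap _ _ mulA Hreg Hnoabs _ hop_heap mul_hopr)).
  - exact (Q_mul_hopr _ _ mulA Hreg Hnoabs _ mul_hopr).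
  - exact (Q_mul_group _ _ mulA Hreg Hnoabs b).
Qed.
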